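(* Fix $C\neq1$ and fix $\epsilon\in(0,1)$, $\omega>0$ such that $\delta_0=\delta(C)-C\epsilon-\omega>0$. Fix $M>\frac1{\delta_0}$ and $\theta<M\delta_0-1$. There is a positive constant $N$ such that \[ \mathbb{P}\Big(\bigcup_{1\le i\le n}\{M\log n+1\le\#\mathcal{E}_i\le\epsilon n\}\Big)\le\frac1{n^\theta} \] for all $n\ge N$.
   Context: Let $C>0$ be a constant and $(\alpha_n)_{n\ge1}$ a sequence of nonnegative reals with $\alpha_n\to0$. For each $n$, consider the complete graph $K_n$ on vertex set $\{1,\dots,n\}$; each edge $e$ of $K_n$ is independently open with probability $p_n(e)$ and closed otherwise, where $\frac{C-\alpha_n}{n}\le p_n(e)\le\frac{C+\alpha_n}{n}$ for every edge $e$. Let $G$ be the resulting random graph of open edges, with probability measure $\mathbb{P}$. For a vertex $i$, $\mathcal{E}_i$ denotes the open component of $G$ containing $i$ (the set of vertices joined to $i$ by a path of open edges, together with $i$ itself), and $\#\mathcal{E}_i$ its number of vertices. $\delta(C)=C-1-\log C$. $\log$ is the natural logarithm. *)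

From HB Require Import structures.
From mathcomp Require Import all_boot all_order all_algebra.
From mathcomp Require Import all_classical all_reals all_analysis.
Set Implicit Arguments. Unset Strict Implicit. Unset Printing Implicit Defensive.
Import Order.TTheory GRing.Theory Num.Theory.
Local Open Scope ring_scope.

(* Edges of the complete graph K_n on vertex set 'I_n (vertices 0..n-1),
   each unordered pair {i,j} represented once as (i,j) with i < j. *)
Definition edge (n : nat) := {e : 'I_n * 'I_n | (e.1 < e.2)%N}.

Definition config (n : nat) := {ffun edge n -> bool}.

Definition conf_prob (R : realType) (n : nat) (p : edge n -> R) (w : config n) : R :=
  \prod_(e : edge n) (if w e then p e else 1 - p e).

Definition Prob (R : realType) (n : nat) (p : edge n -> R) (A : pred (config n)) : R :=
  \sum_(w : config n | A w) conf_prob p w.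

Definition adj (n : nat) (w : config n) : rel 'I_n := fun i j =>
  [exists e : edge n, w e &&
     ((((val e).1 == i) && ((val e).2 == j)) || (((val e).1 == j) && ((val e).2 == i)))].

Definition comp (n : nat) (w : config n) (i : 'I_n) : {set 'I_n} :=
  [set j | connect (adj w) i j].
Definition comp_size (n : nat) (w : config n) (i : 'I_n) : nat := #|comp w i|.

Definition delta (R : realType) (C : R) : R := C - 1 - ln C.

(* If the component S of a vertex has k vertices, a breadth-first parent map
   f : S -> S (fixing the complement) spans it with k - 1 open edges, while the
   k (n - k) edges leaving S are all closed.  A union bound over the pairs
   (S, f), of which there are C(n, k) k^k with |S| = k, bounds the probability
   by the sum over M log n + 1 <= k <= eps n of
   C(n, k) k^k p+^(k - 1) exp (- p- k (n - k)),  p+- = (C +- alpha_n) / n.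
   With k^k <= k! e^k, n^_k <= n^k, ln (1 + x) <= x and k <= eps n, each term
   is at most (n / C) exp (- delta0 k) once alpha_n is small, and the
   geometric tail from M log n + 1 is of order n^(1 - M delta0) <= n^-theta. *)

From Pilot Require Import Defs.
From HB Require Import structures.
From mathcomp Require Import all_boot all_order all_algebra.
From mathcomp Require Import all_classical all_reals all_analysis.
From mathcomp Require Import ring lra.
Import Order.TTheory GRing.Theory Num.Theory.
Import numFieldNormedType.Exports.
Local Open Scope ring_scope.
Set Implicit Arguments. Unset Strict Implicit. Unset Printing Implicit Defensive.

Section Edges.
Variable n : nat.
Implicit Types (e : edge n) (a b : 'I_n) (S : {set 'I_n}).

Definition joins e a b : bool :=
  ((val e).1 == a) && ((val e).2 == b) || ((val e).1 == b) && ((val e).2 == a).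

Definition boundary S : {set edge n} :=
  [set e | ((val e).1 \in S) != ((val e).2 \in S)].

Lemma joinsP e a b : joins e a b -> val e = (a, b) \/ val e = (b, a).
Proof.
rewrite /joins; case: (val e) => x y /=.
by case/orP => /andP[/eqP -> /eqP ->]; [left | right].
Qed.

Lemma joins_ends e : joins e (val e).1 (val e).2.
Proof. by rewrite /joins !eqxx. Qed.

Lemma joins_inj e e' a b : joins e a b -> joins e' a b -> e = e'.
Proof.
move=> /joinsP eab /joinsP e'ab; apply: val_inj.
have := valP e; have := valP e'.
case: eab e'ab => -> [] -> //= lt1 lt2; by have := ltn_trans lt1 lt2; rewrite ltnn.
Qed.

Lemma exists_joins a b : a != b -> exists e, joins e a b.
Proof.
move=> /negPf ab; case: (ltngtP a b) => [lt | gt | /val_inj eq].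
- by exists (exist _ (a, b) lt); rewrite /joins !eqxx.
- by exists (exist _ (b, a) gt); rewrite /joins !eqxx orbT.
- by rewrite eq eqxx in ab.
Qed.

Lemma boundary_joins S e a b :
  joins e a b -> (e \in boundary S) = ((a \in S) != (b \in S)).
Proof. by rewrite inE => /joinsP[] ->; rewrite // eq_sym. Qed.

Lemma adjP (w : config n) a b : reflect (exists2 e, w e & joins e a b) (adj w a b).
Proof.
by apply: (iffP existsP) => [[e /andP[]] | [e we ab]]; exists e => //; apply/andP.
Qed.

Lemma adj_sym (w : config n) a b : adj w a b = adj w b a.
Proof. by apply/adjP/adjP => -[e we ab]; exists e; rewrite // /joins orbC. Qed.

Lemma card_boundary S : (#|S| * (n - #|S|) <= #|boundary S|)%N.
Proof.
have -> : (#|S| * (n - #|S|) = #|finset.setX S (~: S)|)%N.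
  by rewrite cardsX [#|~: S|]cardsCs finset.setCK card_ord.
pose g e := if (val e).1 \in S then val e else ((val e).2, (val e).1).
apply: leq_trans (leq_imset_card g _); apply/subset_leq_card/fintype.subsetP => -[a b].
rewrite !inE /= => /andP[aS bS].
have [e eab] : exists e, joins e a b by apply: exists_joins; apply: contraNneq bS => <-.
apply/imsetP; exists e; first by rewrite (boundary_joins _ eab) aS bS.
by rewrite /g; case/joinsP: eab => ->; rewrite /= ?aS ?(negbTE bS).
Qed.

Definition cylinder (T B : {set edge n}) : pred (config n) :=
  fun w => [forall e in T, w e] && [forall e in B, ~~ w e].

Definition endo_on S (f : {ffun 'I_n -> 'I_n}) : bool :=
  [forall j, if j \in S then f j \in S else f j == j].

Definition map_edges S (f : {ffun 'I_n -> 'I_n}) : {set edge n} :=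
  [set e | [exists j in S, (f j != j) && joins e j (f j)]].

Definition tree_map S (f : {ffun 'I_n -> 'I_n}) : bool :=
  endo_on S f && (#|S| - 1 <= #|map_edges S f|)%N.

Lemma disjoint_map_edges_boundary S f :
  endo_on S f -> [disjoint map_edges S f & boundary S].
Proof.
move=> /forallP endo; rewrite disjoint_subset; apply/fintype.subsetP => e.
rewrite inE => /existsP[j /and3P[jS _ ej]]; rewrite inE /=.
by rewrite (boundary_joins _ ej) jS; have := endo j; rewrite jS => ->.
Qed.

End Edges.

Section EdgeProbability.
Variables (R : realType) (n : nat) (p : edge n -> R).
Hypothesis p01 : forall e, 0 <= p e <= 1.

Lemma conf_prob_ge0 w : 0 <= conf_prob p w.
Proof.
apply: prodr_ge0 => e _; have /andP[p0 p1] := p01 e.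
by case: (w e); rewrite ?subr_ge0.
Qed.

Lemma Prob_family (Q : edge n -> pred bool) :
  Prob p (mem (family Q)) =
  \prod_e \sum_(b | Q e b) (if b then p e else 1 - p e).
Proof. by rewrite bigA_distr_big_dep. Qed.

Lemma Prob_cylinder (T B : {set edge n}) : [disjoint T & B] ->
  Prob p (cylinder T B) = \prod_(e in T) p e * \prod_(e in B) (1 - p e).
Proof.
move=> dTB.
pose Q e : pred bool :=
  fun b => if e \in T then b else if e \in B then ~~ b else true.
have -> : Prob p (cylinder T B) = Prob p (mem (family Q)).
  apply: eq_bigl => w; rewrite inE /cylinder; apply/andP/forallP.
    case=> /forallP wT /forallP wB e; rewrite unfold_in /Q.
    case: ifPn => eT; first exact: (implyP (wT e)).
    by case: ifPn => // eB; exact: (implyP (wB e)).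
  move=> wQ; split; apply/forallP => e; apply/implyP => eTB; have := wQ e;
    rewrite unfold_in /Q eTB //.
  by rewrite (disjointFl dTB eTB).
rewrite Prob_family (bigID (mem T)) /=; congr (_ * _).
  by apply: eq_bigr => e eT; rewrite /Q eT big_mkcond big_bool /= addr0.
rewrite [LHS]big_mkcond [RHS]big_mkcond; apply: eq_bigr => e _ /=.
case: (boolP (e \in T)) => [eT | /negbTE eT]; first by rewrite (disjointFr dTB eT).
rewrite /Q eT big_mkcond big_bool /=.
by case: (e \in B); rewrite ?add0r // addrC subrK.
Qed.

Lemma Prob_le_sum (I : finType) (P : pred I) (E : I -> pred (config n))
    (A : pred (config n)) :
  (forall w, A w -> exists2 x, P x & E x w) ->
  Prob p A <= \sum_(x | P x) Prob p (E x).
Proof.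
move=> AE; rewrite /Prob.
under [X in _ <= X]eq_bigr do rewrite big_mkcond.
rewrite exchange_big big_mkcond /=; apply: ler_sum => w _.
have term_ge0 x : 0 <= (if E x w then conf_prob p w else 0).
  by case: ifP => // _; exact: conf_prob_ge0.
case: ifP => [Aw | _]; last exact: sumr_ge0.
have [x Px Exw] := AE w Aw.
by rewrite (bigD1 x) //= Exw lerDl sumr_ge0.
Qed.

End EdgeProbability.

Section SpanningTree.
Variables (n : nat) (w : config n) (i : 'I_n).
Local Notation S := (Defs.comp w i).

Lemma comp_root : i \in S.
Proof. by rewrite inE connect0. Qed.

Lemma comp_adj a b : a \in S -> adj w a b -> b \in S.
Proof. by rewrite !inE => ia /connect1; apply: connect_trans. Qed.

Fixpoint ball m : {set 'I_n} :=
  if m is m'.+1 then [set v | [exists u in ball m', (u == v) || adj w u v]]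
  else [set i].

Lemma comp_ball v : v \in S -> exists m, v \in ball m.
Proof.
rewrite inE => /connectP[s s_path ->] {v}.
elim/last_ind: s s_path => [|s x IH]; first by exists 0%N; rewrite inE.
rewrite rcons_path last_rcons => /andP[s_path x_adj].
have [m hm] := IH s_path; exists m.+1; rewrite inE.
by apply/existsP; exists (last i s); rewrite hm x_adj orbT.
Qed.

(* Graph distance from [i]; the junk value 0 outside the component is unused. *)
Definition depth v : nat :=
  if pselect (exists m, v \in ball m) is left h then ex_minn h else 0.

Lemma depth_ball v m :
  v \in ball m -> v \in ball (depth v) /\ forall m', v \in ball m' -> (depth v <= m')%N.
Proof.
rewrite /depth => vm; case: pselect => [h | []]; last by exists m.
by case: ex_minnP.
Qed.

Lemma depth_step v : v \in S -> v != i -> exists u, adj w v u && (depth u < depth v)%N.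
Proof.
move=> /comp_ball[m /depth_ball[+ depth_min]] vi.
case: (depth v) depth_min => [|d] depth_min /=; first by rewrite inE (negbTE vi).
rewrite inE => /existsP[u /andP[ud /orP[/eqP uv | uv]]].
  by have := depth_min d; rewrite -uv ud ltnn => /(_ isT).
by exists u; rewrite adj_sym uv; have [_ /(_ d ud)] := depth_ball ud.
Qed.

Definition parent : {ffun 'I_n -> 'I_n} := [ffun j =>
  if (j \in S) && (j != i) then odflt j [pick u | adj w j u && (depth u < depth j)%N]
  else j].

Lemma parentP j :
  j \in S -> j != i -> adj w j (parent j) && (depth (parent j) < depth j)%N.
Proof.
move=> jS ji; rewrite ffunE jS ji /=; case: pickP => [u -> // | none].
by have [u] := depth_step jS ji; rewrite none.
Qed.

Lemma endo_on_parent : endo_on S parent.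
Proof.
apply/forallP => j; case: ifPn => jS; last by rewrite ffunE (negbTE jS).
have [-> | ji] := eqVneq j i; first by rewrite ffunE eqxx andbF comp_root.
by have /andP[/(comp_adj jS) + _] := parentP jS ji.
Qed.

Lemma card_map_edges_parent : (#|S| - 1 <= #|map_edges S parent|)%N.
Proof.
(* j is recovered from the edge to its parent as the deeper endpoint. *)
pose deeper (e : edge n) :=
  if (depth (val e).1 < depth (val e).2)%N then (val e).2 else (val e).1.
have -> : (#|S| - 1 = #|S :\ i|)%N by rewrite (cardsD1 i S) comp_root add1n subn1.
apply: leq_trans (leq_imset_card deeper _).
apply/subset_leq_card/fintype.subsetP => j; rewrite in_setD1 => /andP[ji jS].
have /andP[/adjP[e _ ej] dj] := parentP jS ji.
apply/imsetP; exists e.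
  rewrite inE; apply/existsP; exists j; rewrite jS ej andbT.
  by apply: contraTneq dj => ->; rewrite ltnn.
by rewrite /deeper; case/joinsP: ej => -> /=; rewrite ?dj // ltnNge (ltnW dj).
Qed.

Lemma tree_map_parent : tree_map S parent.
Proof. by rewrite /tree_map endo_on_parent card_map_edges_parent. Qed.

Lemma parent_edges_open e : e \in map_edges S parent -> w e.
Proof.
rewrite inE => /existsP[j /and3P[jS pj ej]].
have ji : j != i by apply: contraNneq pj => ->; rewrite ffunE eqxx andbF.
have /andP[/adjP[e' we' e'j] _] := parentP jS ji.
by rewrite (joins_inj ej e'j).
Qed.

Lemma boundary_comp_closed e : e \in boundary S -> ~~ w e.
Proof.
rewrite (boundary_joins _ (joins_ends e)); apply: contraL => we.
have adj12 : adj w (val e).1 (val e).2 by apply/adjP; exists e; rewrite ?joins_ends.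
by rewrite negbK; apply/eqP; apply/idP/idP => /comp_adj; apply; rewrite // adj_sym.
Qed.

Lemma comp_tree_cylinder :
  exists f, tree_map S f && cylinder (map_edges S f) (boundary S) w.
Proof.
exists parent; rewrite tree_map_parent /=; apply/andP; split; apply/forall_inP.
- exact: parent_edges_open.
- exact: boundary_comp_closed.
Qed.

End SpanningTree.

Lemma card_endo_on n (S : {set 'I_n}) :
  #|[pred f : {ffun 'I_n -> 'I_n} | endo_on S f]| = (#|S| ^ #|S|)%N.
Proof.
pose F j := [pred u : 'I_n | if j \in S then u \in S else u == j].
rewrite (eq_card (B := family F)) // card_family foldrE big_map big_enum /=.
rewrite (eq_bigr (fun j => if j \in S then #|S| else 1%N)); last first.
  move=> j _; case: ifP => _; first exact: eq_card.
  by rewrite -(card1 j); apply: eq_card.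
by rewrite -big_mkcond prod_nat_const.
Qed.

Section CountingSums.
Variables (R : realType) (n : nat) (c : pred nat).

Lemma sum_sets_by_card (F : nat -> R) :
  \sum_(S : {set 'I_n} | c #|S|) F #|S| = \sum_(k < n.+1 | c k) 'C(n, k)%:R * F k.
Proof.
have card_lt (S : {set 'I_n}) : (#|S| < n.+1)%N by have := max_card S; rewrite card_ord.
rewrite (partition_big (fun S => Ordinal (card_lt S)) (fun k : 'I_n.+1 => c k)) //=.
apply: eq_bigr => k ck.
rewrite (eq_bigl (mem [set S : {set 'I_n} | #|S| == k])); last first.
  by move=> S; rewrite !inE -val_eqE /= andb_idl // => /eqP ->.
rewrite (eq_bigr (fun _ => F k)); last by move=> S /[!inE] /eqP ->.
by rewrite sumr_const card_draws card_ord mulr_natl.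
Qed.

Lemma sum_endo_on (F : nat -> R) :
  \sum_(x : {set 'I_n} * {ffun 'I_n -> 'I_n} | c #|x.1| && endo_on x.1 x.2) F #|x.1|
  = \sum_(k < n.+1 | c k) ('C(n, k) * k ^ k)%N%:R * F k.
Proof.
rewrite -(pair_big_dep (fun S : {set 'I_n} => c #|S|) (@endo_on n) (fun S _ => F #|S|)).
rewrite (eq_bigr (fun S : {set 'I_n} => (#|S| ^ #|S|)%N%:R * F #|S|)); last first.
  by move=> S _; rewrite sumr_const -card_endo_on mulr_natl.
rewrite (sum_sets_by_card (fun k => (k ^ k)%N%:R * F k)).
by apply: eq_bigr => k _; rewrite natrM mulrA.
Qed.

End CountingSums.

Section ComponentBound.
Variables (R : realType) (n : nat) (p : edge n -> R) (pmin pmax : R).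
Hypotheses (p_bounds : forall e, pmin <= p e <= pmax)
  (pmin_ge0 : 0 <= pmin) (pmin_le_pmax : pmin <= pmax) (pmax_le1 : pmax <= 1).

Let p01 e : 0 <= p e <= 1.
Proof.
by have /andP[le1 le2] := p_bounds e; rewrite (le_trans pmin_ge0) ?(le_trans le2).
Qed.

Lemma Prob_tree_cylinder_le S f : tree_map S f ->
  Prob p (cylinder (map_edges S f) (boundary S))
  <= pmax ^+ (#|S| - 1) * expR (- pmin) ^+ (#|S| * (n - #|S|)).
Proof.
move=> /andP[endo card_edges]; rewrite Prob_cylinder ?disjoint_map_edges_boundary //.
have [pmax_ge0 epmin_le1] : 0 <= pmax /\ expR (- pmin) <= 1.
  by rewrite (le_trans pmin_ge0) // expR_le1 oppr_le0.
apply: ler_pM.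
- by apply: prodr_ge0 => e _; case/andP: (p01 e).
- by apply: prodr_ge0 => e _; case/andP: (p01 e); rewrite subr_ge0.
- apply: le_trans (_ : \prod_(e in map_edges S f) pmax <= _).
    apply: ler_prod => e _; case/andP: (p_bounds e) => le1 ->.
    by rewrite (le_trans pmin_ge0 le1).
  by rewrite prodr_const ler_wiXn2l.
- apply: le_trans (_ : \prod_(e in boundary S) expR (- pmin) <= _).
    apply: ler_prod => e _; case/andP: (p01 e) (p_bounds e) => _ p1 /andP[le1 _].
    by rewrite subr_ge0 p1 (le_trans _ (expR_ge1Dx _)) // lerD2l lerN2.
  by rewrite prodr_const ler_wiXn2l ?expR_ge0 ?card_boundary.
Qed.

Lemma Prob_comp_size_le (c : pred nat) :
  Prob p (fun w => [exists i, c (comp_size w i)])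
  <= \sum_(k < n.+1 | c k)
       ('C(n, k) * k ^ k)%N%:R * (pmax ^+ (k - 1) * expR (- pmin) ^+ (k * (n - k))).
Proof.
pose P (x : {set 'I_n} * {ffun 'I_n -> 'I_n}) := c #|x.1| && tree_map x.1 x.2.
apply: le_trans (Prob_le_sum p01 (P := P)
  (E := fun x => cylinder (map_edges x.1 x.2) (boundary x.1)) _) _.
  move=> w /existsP[i ci]; have [f /andP[tree cyl]] := comp_tree_cylinder w i.
  by exists (Defs.comp w i, f); rewrite /P ?ci.
pose F k := pmax ^+ (k - 1) * expR (- pmin) ^+ (k * (n - k)).
have F_ge0 k : 0 <= F k by rewrite mulr_ge0 ?exprn_ge0 ?expR_ge0 ?(le_trans pmin_ge0).
rewrite -(sum_endo_on n c F) [X in X <= _]big_mkcond [X in _ <= X]big_mkcond /=.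
apply: ler_sum => -[S f]; rewrite /P /=.
case: ifPn => [/andP[cS tree] | _]; last by case: ifP.
by have /andP[endo _] := tree; rewrite cS endo Prob_tree_cylinder_le.
Qed.

End ComponentBound.
Section Estimates.
Variable R : realType.

Definition delta0 (C eps omega : R) := delta C - C * eps - omega.

Lemma expn_le_fact_expR k : (k ^ k)%N%:R <= k`!%:R * expR k%:R :> R.
Proof.
case: k => [|k]; first by rewrite expR0 mulr1.
have := @expR_ge1Dxn R k.+1%:R k (ler0n _ _).
rewrite -ler_pdivrMl ?ltr0n ?fact_gt0 // natrX mulrC => /(le_trans _); apply.
by rewrite lerDr.
Qed.

Lemma bin_expn_le n k : ('C(n, k) * k ^ k)%N%:R <= n%:R ^+ k * expR k%:R :> R.
Proof.
rewrite natrM; apply: le_trans (ler_wpM2l (ler0n _ _) (expn_le_fact_expR k)) _.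
rewrite mulrA -natrM bin_ffact -natrX ler_wpM2r ?expR_ge0 // ler_nat.
rewrite ffact_prod -[X in (_ <= n ^ X)%N](card_ord k) -prod_nat_const.
by apply: leq_prod => i _; exact: leq_subr.
Qed.

Lemma tree_exponent_le (C a eps omega k n : R) :
  0 < C -> 0 <= a <= C -> a / C + a <= omega -> 0 <= eps ->
  1 <= k -> k <= eps * n -> 0 < n ->
  k + (k - 1) * ln (C + a) - (C - a) / n * (k * (n - k))
  <= - ln C - delta0 C eps omega * k.
Proof.
move=> C0 /andP[a0 aC] a_small eps0 k1 k_eps n0.
have lnCa_ge : ln C <= ln (C + a) by rewrite ler_ln ?posrE ?lerDl //; lra.
have lnCa_le : ln (C + a) <= ln C + a / C.
  have -> : C + a = C * (1 + a / C).
    by rewrite mulrDr mulr1 [C * _]mulrC divfK ?gt_eqF.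
  have aC_ge0 : 0 <= a / C by rewrite divr_ge0 // ltW.
  rewrite lnM ?posrE ?lerD2l ?le_ln1Dx //; lra.
have Y_ge : (C - a) * (1 - eps) <= (C - a) / n * (n - k).
  rewrite -mulrA; apply: ler_wpM2l; first by rewrite subr_ge0.
  have : n^-1 * k <= eps by rewrite mulrC ler_pdivrMr.
  rewrite mulrBr mulVf ?gt_eqF //; lra.
rewrite mulrCA; set Y := _ / n * (n - k) in Y_ge *.
have k0 : 0 <= k by lra.
have := ler_wpM2l k0 lnCa_le; have := ler_wpM2l k0 Y_ge.
have := ler_wpM2l k0 a_small; have := mulr_ge0 k0 (mulr_ge0 a0 eps0).
rewrite /delta0 /delta; lra.
Qed.

Lemma tree_term_le (C a eps omega : R) (n k : nat) :
  0 < C -> 0 <= a <= C -> a / C + a <= omega -> 0 <= eps ->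
  (0 < k)%N -> (k <= n)%N -> k%:R <= eps * n%:R ->
  ('C(n, k) * k ^ k)%N%:R *
    (((C + a) / n%:R) ^+ (k - 1) * expR (- ((C - a) / n%:R)) ^+ (k * (n - k)))
  <= n%:R / C * expR (- (delta0 C eps omega * k%:R)).
Proof.
move=> C0 aC a_small eps0 k0 kn k_eps; have /andP[a0 _] := aC.
have n0 : 0 < n%:R :> R by rewrite ltr0n (leq_trans k0 kn).
have Ca0 : 0 < C + a by rewrite ltr_wpDr.
apply: le_trans (ler_wpM2r _ (bin_expn_le n k)) _.
  by rewrite mulr_ge0 ?exprn_ge0 ?expR_ge0 ?divr_ge0 ?ltW.
set A := (k - 1)%:R * ln (C + a).
set B := - ((C - a) / n%:R) * (k * (n - k))%:R.
have -> : n%:R ^+ k * expR k%:R *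
    (((C + a) / n%:R) ^+ (k - 1) * expR (- ((C - a) / n%:R)) ^+ (k * (n - k)))
    = n%:R * expR (k%:R + A + B).
  rewrite expr_div_n -expRM_natr -(@lnK _ (C + a)) ?posrE // -expRM_natl -/A -/B.
  have -> : n%:R ^+ k = n%:R ^+ (k - 1) * n%:R :> R by rewrite -exprSr subn1 prednK.
  by rewrite !expRD; field; rewrite expf_neq0 ?gt_eqF.
set X := delta0 C eps omega * k%:R.
have -> : n%:R / C * expR (- X) = n%:R * expR (- ln C - X).
  by rewrite expRD [expR (- ln C)]expRN lnK ?posrE // mulrA.
rewrite ler_pM2l // ler_expR.
rewrite /A /B natrB // natrM natrB // mulNr.
by apply: tree_exponent_le; rewrite ?ler1n.
Qed.

Lemma sum_expR_tail (r lo : R) m : 0 < r ->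
  \sum_(k < m | lo <= k%:R) expR (- (r * k%:R)) <= expR (- (r * lo)) / (1 - expR (- r)).
Proof.
move=> r0; have q1 : expR (- r) < 1 by rewrite expR_lt1 oppr_lt0.
have e_succ x : expR (- (r * (x + 1))) = expR (- r) * expR (- (r * x)).
  by rewrite -expRD; congr expR; ring.
have e_le x y : x <= y -> expR (- (r * y)) <= expR (- (r * x)).
  by move=> xy; rewrite ler_expR lerN2 ler_pM2l.
rewrite ler_pdivlMr ?subr_gt0 // mulrC big_mkcond /=.
suff : (1 - expR (- r)) * \sum_(k < m) (if lo <= k%:R then expR (- (r * k%:R)) else 0)
    <= Num.max 0 (expR (- (r * lo)) - expR (- (r * m%:R))).
  by move/le_trans; apply; rewrite ge_max expR_ge0 lerBlDr lerDl expR_ge0.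
elim: m => [|m IH]; first by rewrite big_ord0 mulr0 le_max lexx.
rewrite big_ord_recr /= mulrDr -natr1 e_succ.
case: ifPn => [lo_m | /negbTE m_lt_lo]; last first.
  rewrite mulr0 addr0 (le_trans IH) // ge_max !le_max lexx /= subr_le0 e_le //.
  by rewrite ltW // ltNge m_lt_lo.
rewrite max_r ?subr_ge0 ?e_le // in IH.
by rewrite le_max; apply/orP; right; lra.
Qed.

Lemma tail_le_inv_powR (x C r M theta : R) : 0 < C -> 0 < r -> 0 < x ->
  ln (expR (- r) / (C * (1 - expR (- r)))) <= (M * r - 1 - theta) * ln x ->
  x / C * (expR (- (r * (M * ln x + 1))) / (1 - expR (- r))) <= 1 / x `^ theta.
Proof.
move=> C0 r0 x0; set K := expR (- r) / _ => lnK_le.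
have q_lt1 : 0 < 1 - expR (- r) by rewrite subr_gt0 expR_lt1 oppr_lt0.
have K0 : 0 < K by rewrite divr_gt0 ?expR_gt0 ?mulr_gt0.
have -> : x / C * (expR (- (r * (M * ln x + 1))) / (1 - expR (- r)))
    = expR (ln K + ln x - r * M * ln x).
  have -> : - (r * (M * ln x + 1)) = - r + - (r * M * ln x) by ring.
  by rewrite !expRD !lnK ?posrE // /K; field; rewrite !gt_eqF ?expR_gt0.
have -> : x `^ theta = expR (theta * ln x).
  by rewrite -[in LHS](@lnK _ x) ?posrE // -expRM mulrC.
by rewrite div1r -expRN ler_expR; lra.
Qed.

Lemma sum_tree_terms_le (C a eps omega lo : R) (n : nat) :
  let r := delta0 C eps omega in
  0 < C -> 0 <= a <= C -> a / C + a <= omega -> 0 <= eps -> 1 <= lo -> 0 < r ->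
  \sum_(k < n.+1 | (lo <= k%:R) && (k%:R <= eps * n%:R))
     ('C(n, k) * k ^ k)%N%:R *
       (((C + a) / n%:R) ^+ (k - 1) * expR (- ((C - a) / n%:R)) ^+ (k * (n - k)))
  <= n%:R / C * (expR (- (r * lo)) / (1 - expR (- r))).
Proof.
move=> r C0 aC a_small eps0 lo1 r0.
apply: le_trans (_ : \sum_(k < n.+1 | lo <= k%:R) n%:R / C * expR (- (r * k%:R)) <= _).
  rewrite [X in _ <= X]big_mkcond [X in X <= _]big_mkcond /=; apply: ler_sum => k _.
  case: ifPn => [/andP[lo_k k_eps] | _]; last first.
    by case: ifP => // _; rewrite mulr_ge0 ?expR_ge0 ?divr_ge0 ?ler0n ?ltW.
  rewrite lo_k; apply: tree_term_le => //; last by rewrite -ltnS.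
  by rewrite -(ler_nat R) (le_trans lo1).
rewrite -mulr_sumr; apply: ler_wpM2l; first by rewrite divr_ge0 ?ler0n ?ltW.
exact: sum_expR_tail.
Qed.

End Estimates.

Local Open Scope classical_set_scope.
Local Open Scope ring_scope.

Lemma near_infty_exists (P : nat -> Prop) :
  (\forall n \near \oo, P n) -> exists N, (0 < N)%N /\ forall n, (N <= n)%N -> P n.
Proof. by case=> N _ PN; exists N.+1; split=> // n /ltnW; apply: PN. Qed.

Lemma near_alpha_small (R : realType) (alpha : nat -> R) (C omega : R) :
  0 < C -> 0 < omega -> alpha n @[n --> \oo] --> 0 ->
  \forall n \near \oo, alpha n <= C /\ alpha n / C + alpha n <= omega.
Proof.
move=> C0 omega0 alpha_to0; near=> n; split.
  by apply: ltW; near: n; apply: cvgr_lt alpha_to0 _ C0.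
have : alpha n * (1 + C) < omega * C.
  rewrite -ltr_pdivlMr ?addr_gt0 //; near: n; apply: cvgr_lt alpha_to0 _ _.
  by rewrite divr_gt0 ?mulr_gt0 ?addr_gt0.
by rewrite -(ler_pM2r C0) mulrDl divfK ?gt_eqF //; lra.
Unshelve. all: end_near.
Qed.

Theorem lemma3 (R : realType) (C : R) (alpha : nat -> R)
    (p : forall n : nat, edge n -> R) (eps omega M theta : R) :
  0 < C ->
  (forall n, 0 <= alpha n) ->
  alpha n @[n --> \oo] --> (0 : R) ->
  (forall n (e : edge n), 0 <= p n e <= 1) ->
  (forall n (e : edge n),
      (C - alpha n) / n%:R <= p n e <= (C + alpha n) / n%:R) ->
  C != 1 ->
  0 < eps < 1 -> 0 < omega ->
  0 < delta C - C * eps - omega ->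
  1 / (delta C - C * eps - omega) < M ->
  theta < M * (delta C - C * eps - omega) - 1 ->
  exists N : nat, (0 < N)%N /\
    forall n : nat, (N <= n)%N ->
      Prob (p n) (fun w : config n =>
        [exists i : 'I_n,
           (M * ln n%:R + 1 <= (comp_size w i)%:R) &&
           ((comp_size w i)%:R <= eps * n%:R)])
      <= 1 / (n%:R `^ theta).
Proof.
(* [0 <= p <= 1] follows from the bounds on [p] for large n, and [C != 1]
   from [0 < delta C - C * eps - omega] since [delta 1 = 0]. *)
move=> C0 alpha_ge0 alpha_to0 _ p_near _ /andP[eps0 _] omega0 r0 M_big theta_small.
have M0 : 0 < M by apply: lt_trans M_big; rewrite divr_gt0.
set r := delta C - C * eps - omega in r0 M_big theta_small *.
set K := expR (- r) / (C * (1 - expR (- r))).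
apply: near_infty_exists; near=> n.
have [aC a_small] : alpha n <= C /\ alpha n / C + alpha n <= omega.
  by near: n; exact: near_alpha_small.
have n1 : 1 <= n%:R :> R by near: n; exact: nbhs_infty_ger.
have n2C : 2 * C <= n%:R by near: n; exact: nbhs_infty_ger.
have nK : expR (ln K / (M * r - 1 - theta)) <= n%:R by near: n; exact: nbhs_infty_ger.
have a0 := alpha_ge0 n.
pose c k := (M * ln n%:R + 1 <= k%:R) && (k%:R <= eps * n%:R).
apply: le_trans (Prob_comp_size_le (p_near n) _ _ _ c) _.
- by rewrite divr_ge0 ?ler0n ?subr_ge0.
- by rewrite ler_pM2r ?invr_gt0; lra.
- by rewrite ler_pdivrMr; lra.
apply: le_trans (sum_tree_terms_le n C0 _ a_small (ltW eps0) _ r0) _.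
- by rewrite a0 aC.
- by have := mulr_ge0 (ltW M0) (ln_ge0 n1); lra.
have D0 : 0 < M * r - 1 - theta by lra.
apply: tail_le_inv_powR => //; first lra.
have : ln K / (M * r - 1 - theta) <= ln n%:R by rewrite -ler_expR lnK // posrE; lra.
by rewrite ler_pdivrMr // mulrC.
Unshelve. all: end_near.
Qed.
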